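(* Let $b_+,b_->0$, $\delta_+,\delta_-\in\mathbb{R}$ with $b_\pm+\delta_\pm>0$, $\delta_+\neq0$, $\delta_-\neq 0$, and $c>0$. Let $\hat H_{\mathrm I}(0)$ be the type-I interface Hamiltonian at quasi-momentum $k=0$ (defined in the context). Then $0$ is a two-fold eigenvalue of $\hat H_{\mathrm I}(0)$ (i.e. $0$ is an eigenvalue whose eigenspace in $\ell^2(\mathbb{Z};\mathbb{C}^6)$ is two-dimensional) if and only if $$(b_++\delta_+)(b_-+\delta_-)\,f_1(b_+,\delta_+)\,f_1(b_-,\delta_-)=c^2 .$$
   Context: Coefficients: for $n\in\mathbb Z$ let $b_n=b_+$ for $n\ge0$ and $b_n=b_-$ for $n\le -1$; $c_n=b_++\delta_+$ for $n\ge 0$, $c_{-1}=c$, $c_n=b_-+\delta_-$ for $n\le-2$; $d_n=b_++\delta_+$ for $n\ge0$, $d_n=b_-+\delta_-$ for $n\le -1$. For $k\in[-\pi,\pi)$, $\hat H_{\mathrm I}(k)$ is the bounded self-adjoint operator on $\ell^2(\mathbb Z;\mathbb C^6)$ acting on $u=\{(u_{j,n})_{j=1}^6\}_{n\in\mathbb Z}$ by $(\hat H_{\mathrm I}(k)u)_{1,n}=-b_nu_{4,n}-b_nu_{5,n}-c_{n-1}e^{-ik}u_{6,n-1}$, $(\hat H_{\mathrm I}(k)u)_{2,n}=-b_nu_{4,n}-d_ne^{ik}u_{5,n}-b_nu_{6,n}$, $(\hat H_{\mathrm I}(k)u)_{3,n}=-c_nu_{4,n+1}-b_nu_{5,n}-b_nu_{6,n}$,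 $(\hat H_{\mathrm I}(k)u)_{4,n}=-b_nu_{1,n}-b_nu_{2,n}-c_{n-1}u_{3,n-1}$, $(\hat H_{\mathrm I}(k)u)_{5,n}=-b_nu_{1,n}-d_ne^{-ik}u_{2,n}-b_nu_{3,n}$, $(\hat H_{\mathrm I}(k)u)_{6,n}=-c_ne^{ik}u_{1,n+1}-b_nu_{2,n}-b_nu_{3,n}$. For $b>0$, $\varepsilon>-b$, $\varepsilon\ne0$, put $t=(b+\varepsilon)/b$ and $\alpha=-t^2+2t-\frac4t+\frac4{t^2}$, $\beta=-t^3+t^2+t-3+\frac2t$, $\gamma=t^4-t^2+2t-1$, and $$f_1(b,\varepsilon)=\frac{-\alpha+\gamma-\sqrt{(\alpha-\gamma)^2-4\beta^2}}{2\beta}.$$ *)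

From Stdlib Require Import Reals ZArith Lra.
From Coquelicot Require Import Coquelicot.
Open Scope R_scope.

Inductive comp6 := j1 | j2 | j3 | j4 | j5 | j6.

Definition seq6 := Z -> comp6 -> C.

Definition in_l2 (u : seq6) : Prop :=
  forall j : comp6,
    ex_series (fun n : nat => (Cmod (u (Z.of_nat n) j)) ^ 2) /\
    ex_series (fun n : nat => (Cmod (u (- Z.of_nat n - 1)%Z j)) ^ 2).

Definition coef_b (bp bm : R) (n : Z) : R := if (0 <=? n)%Z then bp else bm.
Definition coef_c (bp bm dp dm c : R) (n : Z) : R :=
  if (0 <=? n)%Z then bp + dp else if (n =? -1)%Z then c else bm + dm.
Definition coef_d (bp bm dp dm : R) (n : Z) : R :=
  if (0 <=? n)%Z then bp + dp else bm + dm.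

Definition eik (k : R) : C := (cos k, sin k).
Definition emik (k : R) : C := (cos k, - sin k).

Definition H_I (bp bm dp dm c k : R) (u : seq6) : seq6 :=
  fun n j =>
  let b := coef_b bp bm in
  let cc := coef_c bp bm dp dm c in
  let d := coef_d bp bm dp dm in
  match j with
  | j1 => Copp (Cplus (Cplus (Cmult (b n) (u n j4)) (Cmult (b n) (u n j5)))
                      (Cmult (Cmult (cc (n - 1)%Z) (emik k)) (u (n - 1)%Z j6)))
  | j2 => Copp (Cplus (Cplus (Cmult (b n) (u n j4)) (Cmult (Cmult (d n) (eik k)) (u n j5)))
                      (Cmult (b n) (u n j6)))
  | j3 => Copp (Cplus (Cplus (Cmult (cc n) (u (n + 1)%Z j4)) (Cmult (b n) (u n j5)))
                      (Cmult (b n) (u n j6)))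
  | j4 => Copp (Cplus (Cplus (Cmult (b n) (u n j1)) (Cmult (b n) (u n j2)))
                      (Cmult (cc (n - 1)%Z) (u (n - 1)%Z j3)))
  | j5 => Copp (Cplus (Cplus (Cmult (b n) (u n j1)) (Cmult (Cmult (d n) (emik k)) (u n j2)))
                      (Cmult (b n) (u n j3)))
  | j6 => Copp (Cplus (Cplus (Cmult (Cmult (cc n) (eik k)) (u (n + 1)%Z j1)) (Cmult (b n) (u n j2)))
                      (Cmult (b n) (u n j3)))
  end.

Definition eigvec (A : seq6 -> seq6) (lam : C) (u : seq6) : Prop :=
  in_l2 u /\ forall n j, A u n j = Cmult lam (u n j).

Definition lincomb2 (a b : C) (u v : seq6) : seq6 :=
  fun n j => Cplus (Cmult a (u n j)) (Cmult b (v n j)).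

Definition twofold_eigenvalue (A : seq6 -> seq6) (lam : C) : Prop :=
  exists u v : seq6,
    eigvec A lam u /\ eigvec A lam v /\
    (forall a b : C, (forall n j, lincomb2 a b u v n j = 0%C) -> a = 0%C /\ b = 0%C) /\
    (forall w : seq6, eigvec A lam w -> exists a b : C, forall n j, w n j = lincomb2 a b u v n j).

Definition f1 (b eps : R) : R :=
  let t := (b + eps) / b in
  let alpha := - t ^ 2 + 2 * t - 4 / t + 4 / t ^ 2 in
  let beta := - t ^ 3 + t ^ 2 + t - 3 + 2 / t in
  let gamma := t ^ 4 - t ^ 2 + 2 * t - 1 in
  (- alpha + gamma - sqrt ((alpha - gamma) ^ 2 - 4 * beta ^ 2)) / (2 * beta).

From Stdlib Require Import Reals ZArith Lra Lia.
From Coquelicot Require Import Coquelicot.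
Open Scope R_scope.

(* At [k = 0] the Hamiltonian is real and maps the components [(u1, u2, u3)] and
   [(u4, u5, u6)] to each other by one and the same real recurrence, so its kernel
   in l^2 consists of two copies of the complexification of the space V of decaying
   real solutions, and 0 is a two-fold eigenvalue iff [dim V = 1].
   On each half-line the coefficients are constant.  With [t = (b + delta) / b] and
   [T = t^2 - 1 + 2 / t > 2], the combination [(t - 1) x3(n) + (t^2 - mu) x1(n + 1)]
   is multiplied by [mu] from one site to the next whenever [mu^2 - T mu + 1 = 0].
   For the root [lambda > 1] on the right and [1 / lambda] on the left these
   combinations grow away from the interface, so decay forces them to vanish; this
   gives two linear equations for [(x3(-1), x1(0))], data which determine the whole
   solution.  As [f1(b, delta) = (lambda - t^2) / (t - 1)], the determinant vanishes
   exactly when [(b+ + delta+) (b- + delta-) f1 f1 = c^2], and then a solution that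
   is geometric on each half-line spans V. *)

Lemma pow2_pos (x : R) : x <> 0 -> 0 < x ^ 2.
Proof. intros; rewrite <- Rsqr_pow2; apply Rsqr_pos_lt; assumption. Qed.

Lemma Rabs_inv_lt1 (l : R) : 1 < l -> Rabs (/ l) < 1.
Proof.
  intros Hl. rewrite Rabs_inv, Rabs_right by lra.
  rewrite <- Rinv_1. apply Rinv_lt_contravar; lra.
Qed.

Lemma linear2_trivial (a11 a12 a21 a22 p q : R) :
  a11 * a22 - a12 * a21 <> 0 ->
  a11 * p + a12 * q = 0 -> a21 * p + a22 * q = 0 -> p = 0 /\ q = 0.
Proof.
  intros Hdet E1 E2. split.
  - apply (Rmult_eq_reg_l (a11 * a22 - a12 * a21)); [| exact Hdet].
    transitivity (a22 * (a11 * p + a12 * q) - a12 * (a21 * p + a22 * q)); [ring|].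
    rewrite E1, E2; ring.
  - apply (Rmult_eq_reg_l (a11 * a22 - a12 * a21)); [| exact Hdet].
    transitivity (a11 * (a21 * p + a22 * q) - a21 * (a11 * p + a12 * q)); [ring|].
    rewrite E1, E2; ring.
Qed.

Lemma ratio_pos (b d : R) : 0 < b -> 0 < b + d -> 0 < (b + d) / b.
Proof. intros; apply Rdiv_lt_0_compat; lra. Qed.

Lemma ratio_neq1 (b d : R) : 0 < b -> d <> 0 -> (b + d) / b <> 1.
Proof.
  intros Hb Hd E. apply Hd.
  replace d with ((b + d) / b * b - b) by (field; lra). rewrite E; ring.
Qed.

(** * Transfer roots *)

Definition transfer_trace (t : R) : R := t ^ 2 - 1 + 2 / t.

Definition is_transfer_root (t mu : R) : Prop :=
  mu ^ 2 - transfer_trace t * mu + 1 = 0.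

Definition transfer_root (t : R) : R :=
  (transfer_trace t + sqrt (transfer_trace t ^ 2 - 4)) / 2.

Definition f1_ratio (t : R) : R := (transfer_root t - t ^ 2) / (t - 1).

Lemma transfer_trace_gt2 (t : R) : 0 < t -> t <> 1 -> 2 < transfer_trace t.
Proof.
  intros Ht Ht1.
  assert (E : transfer_trace t - 2 = (t - 1) ^ 2 * (t + 2) / t)
    by (unfold transfer_trace; field; lra).
  assert (0 < (t - 1) ^ 2 * (t + 2) / t).
  { apply Rdiv_lt_0_compat; [apply Rmult_lt_0_compat|]; try lra.
    apply pow2_pos; lra. }
  lra.
Qed.

Lemma transfer_root_is_root (t : R) : 0 < t -> t <> 1 ->
  is_transfer_root t (transfer_root t).
Proof.
  intros Ht Ht1. pose proof (transfer_trace_gt2 t Ht Ht1) as HT.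
  assert (HS : sqrt (transfer_trace t ^ 2 - 4) ^ 2 = transfer_trace t ^ 2 - 4).
  { rewrite <- Rsqr_pow2; apply Rsqr_sqrt; nra. }
  unfold is_transfer_root, transfer_root.
  set (S := sqrt _) in *. nra.
Qed.

Lemma transfer_root_gt1 (t : R) : 0 < t -> t <> 1 -> 1 < transfer_root t.
Proof.
  intros Ht Ht1. pose proof (transfer_trace_gt2 t Ht Ht1).
  pose proof (sqrt_pos (transfer_trace t ^ 2 - 4)).
  unfold transfer_root; lra.
Qed.

Lemma transfer_root_sum (t mu : R) : mu <> 0 -> is_transfer_root t mu ->
  mu + / mu = transfer_trace t.
Proof.
  unfold is_transfer_root; intros Hmu Hr.
  apply (Rmult_eq_reg_l mu); [| exact Hmu].
  field_simplify; [lra | exact Hmu].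
Qed.

Lemma is_transfer_root_inv (t mu : R) : mu <> 0 -> is_transfer_root t mu ->
  is_transfer_root t (/ mu).
Proof.
  intros Hmu Hr. pose proof (transfer_root_sum t mu Hmu Hr) as Hs.
  unfold is_transfer_root. rewrite <- Hs. field. exact Hmu.
Qed.

Lemma transfer_root_prod (t mu : R) : 0 < t -> mu <> 0 -> is_transfer_root t mu ->
  (t ^ 2 - mu) * (t ^ 2 - / mu) = (t - 1) ^ 2.
Proof.
  intros Ht Hmu Hr. pose proof (transfer_root_sum t mu Hmu Hr) as Hs.
  replace ((t ^ 2 - mu) * (t ^ 2 - / mu)) with (t ^ 4 - t ^ 2 * (mu + / mu) + 1)
    by (field; exact Hmu).
  rewrite Hs. unfold transfer_trace. field. lra.
Qed.

(* With [t = (b + d) / b] the constants of [f1] are [beta = - (t - 1) T],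
   [gamma - alpha = T (2 t^2 - T)] and [(alpha - gamma)^2 - 4 beta^2 = T^2 (T^2 - 4)],
   where [T = transfer_trace t]. *)
Lemma f1_eq (b d : R) : 0 < b -> 0 < b + d -> d <> 0 -> f1 b d = f1_ratio ((b + d) / b).
Proof.
  intros Hb Hbd Hd. unfold f1, f1_ratio, transfer_root. cbv zeta.
  pose proof (ratio_pos b d Hb Hbd) as Ht. pose proof (ratio_neq1 b d Hb Hd) as Ht1.
  set (t := (b + d) / b) in *.
  pose proof (transfer_trace_gt2 t Ht Ht1) as HT.
  set (T := transfer_trace t) in *.
  assert (ET : T = (t ^ 3 - t + 2) / t) by (unfold T, transfer_trace; field; lra).
  assert (Edisc : (- t ^ 2 + 2 * t - 4 / t + 4 / t ^ 2 - (t ^ 4 - t ^ 2 + 2 * t - 1)) ^ 2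
                  - 4 * (- t ^ 3 + t ^ 2 + t - 3 + 2 / t) ^ 2 = T ^ 2 * (T ^ 2 - 4))
    by (rewrite ET; field; lra).
  assert (Ebeta : - t ^ 3 + t ^ 2 + t - 3 + 2 / t = - (t - 1) * T)
    by (rewrite ET; field; lra).
  assert (Egamma : - (- t ^ 2 + 2 * t - 4 / t + 4 / t ^ 2) + (t ^ 4 - t ^ 2 + 2 * t - 1)
                   = T * (2 * t ^ 2 - T))
    by (rewrite ET; field; lra).
  rewrite Edisc, Ebeta, Egamma, sqrt_mult, sqrt_pow2 by (nra || lra).
  field. split; lra.
Qed.

(** * Decay at infinity *)

Definition vanishes (f : Z -> R) : Prop :=
  is_lim_seq (fun m => f (Z.of_nat m)) 0 /\ is_lim_seq (fun m => f (- Z.of_nat m - 1)%Z) 0.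

Lemma is_lim_seq_lincomb0 (u v : nat -> R) (a b : R) :
  is_lim_seq u 0 -> is_lim_seq v 0 -> is_lim_seq (fun m => a * u m + b * v m) 0.
Proof.
  intros Hu Hv.
  apply (is_lim_seq_scal_l _ a) in Hu. apply (is_lim_seq_scal_l _ b) in Hv.
  simpl in Hu, Hv. rewrite Rmult_0_r in Hu, Hv.
  replace (Finite 0) with (Finite (0 + 0)) by (f_equal; ring).
  exact (is_lim_seq_plus' _ _ _ _ Hu Hv).
Qed.

Lemma vanishes_lincomb (f g : Z -> R) (a b : R) :
  vanishes f -> vanishes g -> vanishes (fun n => a * f n + b * g n).
Proof. intros [Hf Hf'] [Hg Hg']; split; apply is_lim_seq_lincomb0; assumption. Qed.

Lemma vanishes_shift (f : Z -> R) : vanishes f ->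
  is_lim_seq (fun m => f (Z.of_nat m + 1)%Z) 0 /\
  is_lim_seq (fun m => f (- Z.of_nat m - 2)%Z) 0.
Proof.
  intros [Hr Hl].
  apply is_lim_seq_incr_1 in Hr, Hl.
  split; [eapply is_lim_seq_ext; [| exact Hr] | eapply is_lim_seq_ext; [| exact Hl]];
    intro m; simpl; f_equal; lia.
Qed.

Lemma geometric_vanishing_zero (L : nat -> R) (mu : R) : 1 <= mu ->
  (forall m, L (S m) = mu * L m) -> is_lim_seq L 0 -> L 0%nat = 0.
Proof.
  intros Hmu HL Hlim.
  assert (Hge : forall m, Rabs (L 0%nat) <= Rabs (L m)).
  { induction m as [|m IH]; [lra|].
    rewrite HL, Rabs_mult, (Rabs_right mu) by lra.
    pose proof (Rabs_pos (L m)). nra. }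
  apply is_lim_seq_abs in Hlim. simpl in Hlim. rewrite Rabs_R0 in Hlim.
  pose proof (is_lim_seq_le _ _ _ _ Hge (is_lim_seq_const _) Hlim) as Hle.
  simpl in Hle. pose proof (Rabs_pos (L 0%nat)).
  apply Rabs_eq_0. lra.
Qed.

Lemma sq_summable_components (f : nat -> C) : ex_series (fun m => Cmod (f m) ^ 2) ->
  is_lim_seq (fun m => fst (f m)) 0 /\ is_lim_seq (fun m => snd (f m)) 0.
Proof.
  intros Hs.
  assert (Hmod : is_lim_seq (fun m => Cmod (f m)) 0).
  { apply ex_series_lim_0 in Hs.
    apply (is_lim_seq_continuous sqrt) in Hs; [| apply continuity_pt_sqrt; lra].
    rewrite sqrt_0 in Hs. eapply is_lim_seq_ext; [| exact Hs].
    intro m. apply sqrt_pow2, Cmod_ge_0. }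
  split; apply is_lim_seq_abs_0;
    apply (is_lim_seq_le_le (fun _ => 0) _ (fun m => Cmod (f m)) 0 ); auto using is_lim_seq_const;
    intro m; pose proof (Rmax_Cmod (f m)); split; try apply Rabs_pos;
    eapply Rle_trans; try eassumption; first [apply Rmax_l | apply Rmax_r].
Qed.

Lemma in_l2_vanishes (u : seq6) (j : comp6) : in_l2 u ->
  vanishes (fun n => fst (u n j)) /\ vanishes (fun n => snd (u n j)).
Proof.
  intros Hl. destruct (Hl j) as [Hr Hn].
  apply sq_summable_components in Hr, Hn.
  split; split; tauto.
Qed.

Definition sq_summable (f : Z -> R) : Prop :=
  ex_series (fun m => Cmod (RtoC (f (Z.of_nat m))) ^ 2) /\
  ex_series (fun m => Cmod (RtoC (f (- Z.of_nat m - 1)%Z)) ^ 2).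

Lemma sq_summable_vanishes (f : Z -> R) : sq_summable f -> vanishes f.
Proof.
  intros [Hr Hl].
  split; [exact (proj1 (sq_summable_components _ Hr))
         | exact (proj1 (sq_summable_components _ Hl))].
Qed.

Lemma ex_series_sq_geom (K q : R) : Rabs q < 1 ->
  ex_series (fun m => Cmod (RtoC (K * q ^ m)) ^ 2).
Proof.
  intros Hq.
  assert (Hq2 : Rabs (q ^ 2) < 1).
  { rewrite <- RPow_abs. pose proof (Rabs_pos q). nra. }
  pose proof (ex_series_scal_l (K ^ 2) _ (ex_series_geom _ Hq2)) as Hs.
  eapply ex_series_ext; [| exact Hs].
  intro m. cbv beta. rewrite Cmod_R, pow2_abs.
  change (scal (K ^ 2) ((q ^ 2) ^ m)) with (K ^ 2 * (q ^ 2) ^ m).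
  rewrite Rpow_mult_distr, <- !pow_mult, Nat.mul_comm. reflexivity.
Qed.

Lemma sq_summable_zero : sq_summable (fun _ => 0).
Proof.
  assert (H0 : Rabs 0 < 1) by (rewrite Rabs_R0; lra).
  split; eapply ex_series_ext; try exact (ex_series_sq_geom 0 0 H0);
    intro m; cbv beta; rewrite Rmult_0_l; reflexivity.
Qed.

Definition two_sided (ap am r l : R) (n : Z) : R :=
  if (0 <=? n)%Z then ap * r ^ Z.to_nat n else am * l ^ Z.to_nat (- n - 1).

Lemma two_sided_nonneg (ap am r l : R) (n : Z) : (0 <= n)%Z ->
  two_sided ap am r l n = ap * r ^ Z.to_nat n.
Proof. intros; unfold two_sided; rewrite (proj2 (Z.leb_le _ _)) by assumption; reflexivity. Qed.

Lemma two_sided_neg (ap am r l : R) (n : Z) : (n < 0)%Z ->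
  two_sided ap am r l n = am * l ^ Z.to_nat (- n - 1).
Proof. intros; unfold two_sided; rewrite (proj2 (Z.leb_gt _ _)) by assumption; reflexivity. Qed.

Lemma two_sided_sq_summable (ap am r l : R) : Rabs r < 1 -> Rabs l < 1 ->
  sq_summable (two_sided ap am r l).
Proof.
  intros Hr Hl. split.
  - eapply ex_series_ext; [| exact (ex_series_sq_geom ap r Hr)].
    intro m. rewrite two_sided_nonneg, Nat2Z.id by lia. reflexivity.
  - eapply ex_series_ext; [| exact (ex_series_sq_geom am l Hl)].
    intro m. rewrite two_sided_neg by lia.
    replace (Z.to_nat (- (- Z.of_nat m - 1) - 1)) with m by lia. reflexivity.
Qed.

(** * A three-term recurrence on Z *)

Definition site_eqs (b c d x1 x2 x3 : Z -> R) (n : Z) : Prop :=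
  b n * x1 n + b n * x2 n + c (n - 1)%Z * x3 (n - 1)%Z = 0 /\
  b n * x1 n + d n * x2 n + b n * x3 n = 0 /\
  c n * x1 (n + 1)%Z + b n * x2 n + b n * x3 n = 0.

Definition three_term (b c d x1 x2 x3 : Z -> R) : Prop :=
  forall n : Z, site_eqs b c d x1 x2 x3 n.

Lemma three_term_lincomb (b c d x1 x2 x3 y1 y2 y3 : Z -> R) (p q : R) :
  three_term b c d x1 x2 x3 -> three_term b c d y1 y2 y3 ->
  three_term b c d (fun n => p * x1 n + q * y1 n) (fun n => p * x2 n + q * y2 n)
    (fun n => p * x3 n + q * y3 n).
Proof.
  intros Hx Hy n. destruct (Hx n) as [X1 [X2 X3]], (Hy n) as [Y1 [Y2 Y3]].
  apply (f_equal (Rmult p)) in X1, X2, X3. apply (f_equal (Rmult q)) in Y1, Y2, Y3.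
  repeat split; lra.
Qed.

Lemma three_term_zero (b c d : Z -> R) : three_term b c d (fun _ => 0) (fun _ => 0) (fun _ => 0).
Proof. intro n; repeat split; ring. Qed.

(* A solution is determined by [(x3 (-1), x1 0)]: the equations at site [n]
   transport the pair [(x3 (n - 1), x1 n)] to [(x3 n, x1 (n + 1))] and back. *)
Lemma three_term_unique (b c d x1 x2 x3 : Z -> R) :
  (forall n, b n <> 0) -> (forall n, c n <> 0) -> three_term b c d x1 x2 x3 ->
  x3 (-1)%Z = 0 -> x1 0%Z = 0 -> forall n, x1 n = 0 /\ x2 n = 0 /\ x3 n = 0.
Proof.
  intros Hb Hc Hs H3 H1.
  assert (Hx2 : forall n, x3 (n - 1)%Z = 0 -> x1 n = 0 -> x2 n = 0).
  { intros n A B. destruct (Hs n) as [E1 _]. rewrite A, B in E1.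
    apply (Rmult_eq_reg_l (b n)); [lra | apply Hb]. }
  assert (Hpair : forall n, x3 (n - 1)%Z = 0 /\ x1 n = 0).
  { apply Z.bi_induction; [intros ? ? ->; reflexivity | split; assumption |].
    intro n. replace (Z.succ n - 1)%Z with n by lia. rewrite <- Z.add_1_r.
    destruct (Hs n) as [_ [E2 E3]].
    split; intros [A B].
    - pose proof (Hx2 n A B) as C. rewrite B, C in E2. rewrite C in E3.
      assert (D : x3 n = 0) by (apply (Rmult_eq_reg_l (b n)); [lra | apply Hb]).
      split; [exact D|]. rewrite D in E3.
      apply (Rmult_eq_reg_l (c n)); [lra | apply Hc].
    - rewrite A, B in E3.
      assert (C : x2 n = 0) by (apply (Rmult_eq_reg_l (b n)); [lra | apply Hb]).
      rewrite A, C in E2.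
      assert (D : x1 n = 0) by (apply (Rmult_eq_reg_l (b n)); [lra | apply Hb]).
      split; [| exact D].
      destruct (Hs n) as [E1 _]. rewrite C, D in E1.
      apply (Rmult_eq_reg_l (c (n - 1)%Z)); [lra | apply Hc]. }
  intro n. destruct (Hpair n) as [A B], (Hpair (n + 1)%Z) as [A' _].
  replace (n + 1 - 1)%Z with n in A' by lia.
  split; [exact B | split; [exact (Hx2 n A B) | exact A']].
Qed.

(* If [mu] is a transfer root for [t = e / b], the equations of a site with
   bulk coefficients [b], [e] and bonds [cl], [cr] multiply the transfer form
   [(t - 1) x3 + (t^2 - mu) x1(next)] by [mu]. *)
Lemma transfer_step (b e cl cr mu x1 x2 x3 x3l x1r : R) :
  0 < b -> 0 < e -> is_transfer_root (e / b) mu ->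
  b * x1 + b * x2 + cl * x3l = 0 -> b * x1 + e * x2 + b * x3 = 0 ->
  cr * x1r + b * x2 + b * x3 = 0 ->
  e * (e / b - 1) * x3 + cr * ((e / b) ^ 2 - mu) * x1r =
  mu * (cl * (e / b - 1) * x3l + e * ((e / b) ^ 2 - mu) * x1).
Proof.
  unfold is_transfer_root, transfer_trace. intros Hb He Hmu E1 E2 E3.
  assert (X2 : x2 = - (b * x1 + cl * x3l) / b) by (field_simplify_eq; lra).
  assert (X3 : x3 = - (b * x1 + e * x2) / b) by (field_simplify_eq; lra).
  assert (X1 : cr * x1r = - b * x2 - b * x3) by lra.
  replace (cr * ((e / b) ^ 2 - mu) * x1r) with (((e / b) ^ 2 - mu) * (cr * x1r)) by ring.
  rewrite X1, X3, X2.
  apply Rminus_diag_uniq.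
  transitivity (e * (mu ^ 2 - ((e / b) ^ 2 - 1 + 2 / (e / b)) * mu + 1) * x1);
    [field; lra | rewrite Hmu; ring].
Qed.

(* For a transfer root [nu] of [t = e / b], the sequence
   [nu^n (1 - t^2 / nu, t / nu - 1, t - 1)] solves the bulk equations
   ([P] stands for [nu^n]). *)
Lemma geometric_step (b e nu P : R) : 0 < b -> 0 < e -> nu <> 0 ->
  is_transfer_root (e / b) nu ->
  b * ((1 - (e / b) ^ 2 / nu) * P) + b * ((e / b / nu - 1) * P)
    + e * ((e / b - 1) * (P / nu)) = 0 /\
  b * ((1 - (e / b) ^ 2 / nu) * P) + e * ((e / b / nu - 1) * P) + b * ((e / b - 1) * P) = 0 /\
  e * ((1 - (e / b) ^ 2 / nu) * (nu * P)) + b * ((e / b / nu - 1) * P)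
    + b * ((e / b - 1) * P) = 0.
Proof.
  intros Hb He Hnu Hr. unfold is_transfer_root, transfer_trace in Hr.
  split; [| split]; [field; lra | field; lra |].
  transitivity (e / nu * P * (nu ^ 2 - ((e / b) ^ 2 - 1 + 2 / (e / b)) * nu + 1));
    [field; lra | rewrite Hr; ring].
Qed.

(** * The interface Hamiltonian at k = 0 *)

Definition interface_system (bp bm dp dm c : R) : (Z -> R) -> (Z -> R) -> (Z -> R) -> Prop :=
  three_term (coef_b bp bm) (coef_c bp bm dp dm c) (coef_d bp bm dp dm).

Section Coefficients.
Variables bp bm dp dm c : R.

Lemma coef_b_nonneg (n : Z) : (0 <= n)%Z -> coef_b bp bm n = bp.
Proof. intros; unfold coef_b; rewrite (proj2 (Z.leb_le _ _)) by assumption; reflexivity. Qed.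

Lemma coef_b_neg (n : Z) : (n < 0)%Z -> coef_b bp bm n = bm.
Proof. intros; unfold coef_b; rewrite (proj2 (Z.leb_gt _ _)) by assumption; reflexivity. Qed.

Lemma coef_d_nonneg (n : Z) : (0 <= n)%Z -> coef_d bp bm dp dm n = bp + dp.
Proof. intros; unfold coef_d; rewrite (proj2 (Z.leb_le _ _)) by assumption; reflexivity. Qed.

Lemma coef_d_neg (n : Z) : (n < 0)%Z -> coef_d bp bm dp dm n = bm + dm.
Proof. intros; unfold coef_d; rewrite (proj2 (Z.leb_gt _ _)) by assumption; reflexivity. Qed.

Lemma coef_c_nonneg (n : Z) : (0 <= n)%Z -> coef_c bp bm dp dm c n = bp + dp.
Proof. intros; unfold coef_c; rewrite (proj2 (Z.leb_le _ _)) by assumption; reflexivity. Qed.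

Lemma coef_c_m1 (n : Z) : n = (-1)%Z -> coef_c bp bm dp dm c n = c.
Proof. intros ->; reflexivity. Qed.

Lemma coef_c_le_m2 (n : Z) : (n <= -2)%Z -> coef_c bp bm dp dm c n = bm + dm.
Proof.
  intros; unfold coef_c.
  rewrite (proj2 (Z.leb_gt 0 n)), (proj2 (Z.eqb_neq n (-1))) by lia; reflexivity.
Qed.

End Coefficients.

Ltac simpl_interface :=
  repeat first
    [ rewrite coef_b_nonneg in * by lia | rewrite coef_b_neg in * by lia
    | rewrite coef_d_nonneg in * by lia | rewrite coef_d_neg in * by lia
    | rewrite coef_c_nonneg in * by lia | rewrite coef_c_m1 in * by lia
    | rewrite coef_c_le_m2 in * by lia
    | rewrite two_sided_nonneg by lia | rewrite two_sided_neg by lia ].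

Lemma Cmult_RtoC_eq0 (a : C) (x : R) : x <> 0 -> Cmult a (RtoC x) = 0%C -> a = 0%C.
Proof.
  destruct a as [a1 a2]. intros Hx E.
  unfold Cmult, RtoC in E; simpl in E. injection E as E1 E2.
  assert (a1 * x = 0) by lra. assert (a2 * x = 0) by lra.
  apply injective_projections; simpl; apply (Rmult_eq_reg_r x); lra.
Qed.

Definition embed (x1 x2 x3 y1 y2 y3 : Z -> R) : seq6 := fun n j =>
  match j with
  | j1 => RtoC (x1 n) | j2 => RtoC (x2 n) | j3 => RtoC (x3 n)
  | j4 => RtoC (y1 n) | j5 => RtoC (y2 n) | j6 => RtoC (y3 n)
  end.

Lemma embed_in_l2 (x1 x2 x3 y1 y2 y3 : Z -> R) :
  sq_summable x1 -> sq_summable x2 -> sq_summable x3 ->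
  sq_summable y1 -> sq_summable y2 -> sq_summable y3 ->
  in_l2 (embed x1 x2 x3 y1 y2 y3).
Proof. intros ? ? ? ? ? ? j; destruct j; assumption. Qed.

Lemma embed_kernel (bp bm dp dm c : R) (x1 x2 x3 y1 y2 y3 : Z -> R) :
  interface_system bp bm dp dm c x1 x2 x3 -> interface_system bp bm dp dm c y1 y2 y3 ->
  forall n j, H_I bp bm dp dm c 0 (embed x1 x2 x3 y1 y2 y3) n j
              = Cmult 0%C (embed x1 x2 x3 y1 y2 y3 n j).
Proof.
  intros Hx Hy n j. destruct (Hx n) as [X1 [X2 X3]], (Hy n) as [Y1 [Y2 Y3]].
  destruct j; unfold H_I, embed, Cmult, Cplus, Copp, RtoC, eik, emik;
    rewrite ?cos_0, ?sin_0; simpl; f_equal; lra.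
Qed.

Lemma kernel_components (bp bm dp dm c : R) (u : seq6) :
  (forall n j, H_I bp bm dp dm c 0 u n j = Cmult 0%C (u n j)) ->
  interface_system bp bm dp dm c
    (fun n => fst (u n j1)) (fun n => fst (u n j2)) (fun n => fst (u n j3)) /\
  interface_system bp bm dp dm c
    (fun n => snd (u n j1)) (fun n => snd (u n j2)) (fun n => snd (u n j3)) /\
  interface_system bp bm dp dm c
    (fun n => fst (u n j4)) (fun n => fst (u n j5)) (fun n => fst (u n j6)) /\
  interface_system bp bm dp dm c
    (fun n => snd (u n j4)) (fun n => snd (u n j5)) (fun n => snd (u n j6)).
Proof.
  intros Hu.
  repeat split;
    [ pose proof (Hu n j4) as E | pose proof (Hu n j5) as E | pose proof (Hu n j6) as E
    | pose proof (Hu n j4) as E | pose proof (Hu n j5) as E | pose proof (Hu n j6) as E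
    | pose proof (Hu n j1) as E | pose proof (Hu n j2) as E | pose proof (Hu n j3) as E
    | pose proof (Hu n j1) as E | pose proof (Hu n j2) as E | pose proof (Hu n j3) as E ];
    unfold H_I, Cmult, Cplus, Copp, RtoC, eik, emik in E; rewrite ?cos_0, ?sin_0 in E;
    first [ apply (f_equal fst) in E; simpl in E; lra
          | apply (f_equal snd) in E; simpl in E; lra ].
Qed.

Section Interface.
Variables bp bm dp dm c : R.
Hypotheses (Hbp : 0 < bp) (Hbm : 0 < bm) (Hep : 0 < bp + dp) (Hem : 0 < bm + dm)
  (Hdp : dp <> 0) (Hdm : dm <> 0) (Hc : 0 < c).

Let tp := (bp + dp) / bp.
Let tm := (bm + dm) / bm.
Let lp := transfer_root tp.
Let lm := transfer_root tm.

Lemma tp_pos : 0 < tp.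
Proof. exact (ratio_pos bp dp Hbp Hep). Qed.
Lemma tm_pos : 0 < tm.
Proof. exact (ratio_pos bm dm Hbm Hem). Qed.
Lemma tp_neq1 : tp <> 1.
Proof. exact (ratio_neq1 bp dp Hbp Hdp). Qed.
Lemma tm_neq1 : tm <> 1.
Proof. exact (ratio_neq1 bm dm Hbm Hdm). Qed.
Lemma lp_gt1 : 1 < lp.
Proof. exact (transfer_root_gt1 tp tp_pos tp_neq1). Qed.
Lemma lm_gt1 : 1 < lm.
Proof. exact (transfer_root_gt1 tm tm_pos tm_neq1). Qed.
Lemma lp_neq0 : lp <> 0.
Proof. pose proof lp_gt1; lra. Qed.
Lemma lm_neq0 : lm <> 0.
Proof. pose proof lm_gt1; lra. Qed.
Lemma lp_root : is_transfer_root tp lp.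
Proof. exact (transfer_root_is_root tp tp_pos tp_neq1). Qed.
Lemma lm_inv_root : is_transfer_root tm (/ lm).
Proof.
  exact (is_transfer_root_inv tm lm lm_neq0 (transfer_root_is_root tm tm_pos tm_neq1)).
Qed.

Lemma coef_b_pos (n : Z) : 0 < coef_b bp bm n.
Proof. unfold coef_b; destruct (0 <=? n)%Z; assumption. Qed.

Lemma coef_c_pos (n : Z) : 0 < coef_c bp bm dp dm c n.
Proof. unfold coef_c; destruct (0 <=? n)%Z; [| destruct (n =? -1)%Z]; assumption. Qed.

Lemma interface_system_unique (x1 x2 x3 : Z -> R) :
  interface_system bp bm dp dm c x1 x2 x3 -> x3 (-1)%Z = 0 -> x1 0%Z = 0 ->
  forall n, x1 n = 0 /\ x2 n = 0 /\ x3 n = 0.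
Proof.
  apply three_term_unique; intro n; apply Rgt_not_eq; [apply coef_b_pos | apply coef_c_pos].
Qed.

(* On [n >= 0] the transfer form with the growing root [lp] must vanish. *)
Lemma right_boundary_relation (x1 x2 x3 : Z -> R) :
  interface_system bp bm dp dm c x1 x2 x3 -> vanishes x1 -> vanishes x3 ->
  c * (tp - 1) * x3 (-1)%Z + (bp + dp) * (tp ^ 2 - lp) * x1 0%Z = 0.
Proof.
  intros Hs V1 V3. pose proof lp_gt1 as Hlp.
  set (L := fun m : nat => (tp - 1) * x3 (Z.of_nat m) + (tp ^ 2 - lp) * x1 (Z.of_nat m + 1)%Z).
  assert (HL0 : L 0%nat = 0).
  { apply (geometric_vanishing_zero L lp); [lra | |].
    - intro m. destruct (Hs (Z.of_nat m + 1)%Z) as [E1 [E2 E3]]. simpl_interface.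
      pose proof (transfer_step _ _ _ _ lp _ _ _ _ _ Hbp Hep lp_root E1 E2 E3) as T.
      fold tp in T. replace (Z.of_nat m + 1 - 1)%Z with (Z.of_nat m) in T by lia.
      apply (Rmult_eq_reg_l (bp + dp)); [| lra]. unfold L.
      replace (Z.of_nat (S m)) with (Z.of_nat m + 1)%Z by lia. lra.
    - apply is_lim_seq_lincomb0; [apply V3 | apply vanishes_shift, V1]. }
  destruct (Hs 0%Z) as [E1 [E2 E3]]. simpl_interface.
  pose proof (transfer_step _ _ _ _ lp _ _ _ _ _ Hbp Hep lp_root E1 E2 E3) as T.
  fold tp in T. unfold L in HL0. simpl Z.of_nat in HL0.
  replace (0 - 1)%Z with (-1)%Z in T by reflexivity.
  apply (Rmult_eq_reg_l lp); [| lra]. rewrite <- T, Rmult_0_r.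
  transitivity ((bp + dp) * ((tp - 1) * x3 0%Z + (tp ^ 2 - lp) * x1 (0 + 1)%Z));
    [ring | rewrite HL0; ring].
Qed.

(* On [n < 0] the transfer form with [/ lm] must vanish, as it grows by [lm] to the left. *)
Lemma left_boundary_relation (x1 x2 x3 : Z -> R) :
  interface_system bp bm dp dm c x1 x2 x3 -> vanishes x1 -> vanishes x3 ->
  (bm + dm) * (tm - 1) * x3 (-1)%Z + c * (tm ^ 2 - / lm) * x1 0%Z = 0.
Proof.
  intros Hs V1 V3. pose proof lm_gt1 as Hlm.
  set (K := fun m : nat =>
    (tm - 1) * x3 (- Z.of_nat m - 2)%Z + (tm ^ 2 - / lm) * x1 (- Z.of_nat m - 1)%Z).
  assert (HK0 : K 0%nat = 0).
  { apply (geometric_vanishing_zero K lm); [lra | |].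
    - intro m. destruct (Hs (- Z.of_nat m - 2)%Z) as [E1 [E2 E3]]. simpl_interface.
      pose proof (transfer_step _ _ _ _ (/ lm) _ _ _ _ _ Hbm Hem lm_inv_root E1 E2 E3) as T.
      fold tm in T.
      assert (T' : (bm + dm) * K m = / lm * ((bm + dm) * K (S m))).
      { unfold K.
        replace (- Z.of_nat (S m) - 2)%Z with (- Z.of_nat m - 2 - 1)%Z by lia.
        replace (- Z.of_nat (S m) - 1)%Z with (- Z.of_nat m - 2)%Z by lia.
        replace (- Z.of_nat m - 1)%Z with (- Z.of_nat m - 2 + 1)%Z by lia.
        lra. }
      transitivity (lm * (/ lm * K (S m))); [field; lra | f_equal].
      apply (Rmult_eq_reg_l (bm + dm)); [| lra]. rewrite T'. ring.
    - apply is_lim_seq_lincomb0; [apply vanishes_shift, V3 | apply V1]. }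
  destruct (Hs (-1)%Z) as [E1 [E2 E3]]. simpl_interface.
  pose proof (transfer_step _ _ _ _ (/ lm) _ _ _ _ _ Hbm Hem lm_inv_root E1 E2 E3) as T.
  fold tm in T. unfold K in HK0.
  replace (- Z.of_nat 0 - 2)%Z with (-1 - 1)%Z in HK0 by reflexivity.
  replace (- Z.of_nat 0 - 1)%Z with (-1)%Z in HK0 by reflexivity.
  replace (-1 + 1)%Z with 0%Z in T by reflexivity.
  rewrite T.
  transitivity (/ lm * ((bm + dm) * ((tm - 1) * x3 (-1 - 1)%Z + (tm ^ 2 - / lm) * x1 (-1)%Z)));
    [ring | rewrite HK0; ring].
Qed.

Lemma tp2_neq_lp : tp ^ 2 - lp <> 0.
Proof.
  intro E. pose proof (transfer_root_prod tp lp tp_pos lp_neq0 lp_root) as P.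
  rewrite E, Rmult_0_l in P. pose proof (pow2_pos (tp - 1)) as Q.
  pose proof tp_neq1. lra.
Qed.

Lemma boundary_det_neq0 :
  (bp + dp) * (bm + dm) * f1_ratio tp * f1_ratio tm <> c ^ 2 ->
  c * (tp - 1) * (c * (tm ^ 2 - / lm)) - (bp + dp) * (tp ^ 2 - lp) * ((bm + dm) * (tm - 1)) <> 0.
Proof.
  intros Hne Hdet. apply Hne.
  pose proof tp_neq1. pose proof tm_neq1.
  pose proof (transfer_root_prod tm lm tm_pos lm_neq0
    (transfer_root_is_root tm tm_pos tm_neq1)) as P.
  assert (Id : (c * (tp - 1) * (c * (tm ^ 2 - / lm))
                - (bp + dp) * (tp ^ 2 - lp) * ((bm + dm) * (tm - 1))) * (tm ^ 2 - lm)
               = (tp - 1) * (tm - 1) ^ 2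
                 * (c ^ 2 - (bp + dp) * (bm + dm) * f1_ratio tp * f1_ratio tm)).
  { transitivity (c ^ 2 * (tp - 1) * ((tm ^ 2 - lm) * (tm ^ 2 - / lm))
                  - (bp + dp) * (bm + dm) * (tp ^ 2 - lp) * (tm - 1) * (tm ^ 2 - lm)); [ring|].
    rewrite P. unfold f1_ratio. fold lp lm. field. split; lra. }
  rewrite Hdet, Rmult_0_l in Id. symmetry in Id.
  apply Rmult_integral in Id as [Id | Id]; [| lra].
  exfalso. revert Id. apply Rmult_integral_contrapositive_currified;
    [lra | apply pow_nonzero; lra].
Qed.

Let A := c * (tm - 1).
Let B := bp * tp * lp * (tp - 1).

(* On each half-line a multiple of the decaying geometric solution of
   [geometric_step]; the amplitudes [A], [B] make the equation at site [0]
   hold identically, and the one at site [-1] is [interface_balance]. *)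
Definition zero_mode1 : Z -> R :=
  two_sided (A * (1 - tp ^ 2 * lp)) (B * (1 - tm ^ 2 / lm)) (/ lp) (/ lm).
Definition zero_mode2 : Z -> R :=
  two_sided (A * (tp * lp - 1)) (B * (tm / lm - 1)) (/ lp) (/ lm).
Definition zero_mode3 : Z -> R :=
  two_sided (A * (tp - 1)) (B * (tm - 1)) (/ lp) (/ lm).

Lemma interface_balance : (bp + dp) * (bm + dm) * f1_ratio tp * f1_ratio tm = c ^ 2 ->
  c * (A * (1 - tp ^ 2 * lp)) + bm * (B * (tm / lm - 1)) + bm * (B * (tm - 1)) = 0.
Proof.
  intros Hcond. pose proof tp_pos. pose proof tm_pos. pose proof tp_neq1. pose proof tm_neq1.
  pose proof lp_neq0. pose proof lm_neq0.
  assert (Hc2 : c ^ 2 = bp * tp * (bm * tm) * f1_ratio tp * f1_ratio tm)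
    by (rewrite <- Hcond; unfold tp, tm; field; lra).
  assert (F1 : f1_ratio tp * (1 - tp ^ 2 * lp) = lp * (tp - 1)).
  { unfold f1_ratio. fold lp.
    transitivity (lp * ((tp ^ 2 - lp) * (tp ^ 2 - / lp)) / (tp - 1)); [field; lra |].
    rewrite (transfer_root_prod tp lp); [field | | |]; auto using lp_root; lra. }
  assert (F2 : f1_ratio tm * (tm - 1) = lm - tm ^ 2)
    by (unfold f1_ratio; fold lm; field; lra).
  assert (F3 : lm + / lm = transfer_trace tm)
    by exact (transfer_root_sum tm lm lm_neq0 (transfer_root_is_root tm tm_pos tm_neq1)).
  unfold A, B.
  transitivity (c ^ 2 * (tm - 1) * (1 - tp ^ 2 * lp)
                + bm * (bp * tp * lp * (tp - 1)) * (tm / lm + tm - 2)); [ring|].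
  rewrite Hc2.
  transitivity (bp * bm * tp * tm * (f1_ratio tm * (tm - 1)) * (f1_ratio tp * (1 - tp ^ 2 * lp))
                + bm * (bp * tp * lp * (tp - 1)) * (tm / lm + tm - 2)); [ring|].
  rewrite F1, F2.
  transitivity (bp * bm * tp * lp * (tp - 1) * (tm * (lm + / lm) - tm ^ 3 + tm - 2));
    [unfold Rdiv; ring|].
  rewrite F3. unfold transfer_trace. field. lra.
Qed.

Lemma zero_mode_site_neg (n : Z) : (n < 0)%Z ->
  (bp + dp) * (bm + dm) * f1_ratio tp * f1_ratio tm = c ^ 2 ->
  site_eqs (coef_b bp bm) (coef_c bp bm dp dm c) (coef_d bp bm dp dm)
    zero_mode1 zero_mode2 zero_mode3 n.
Proof.
  intros Hn Hcond. pose proof lm_neq0.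
  pose proof (is_transfer_root_inv tm (/ lm) (Rinv_neq_0_compat _ lm_neq0) lm_inv_root) as Rm.
  rewrite Rinv_inv in Rm.
  unfold site_eqs, zero_mode1, zero_mode2, zero_mode3.
  destruct (Z.eq_dec n (-1)) as [-> | Hn1]; simpl_interface.
  - destruct (geometric_step bm (bm + dm) lm B Hbm Hem lm_neq0 Rm) as [G1 [G2 _]].
    fold tm in G1, G2. simpl.
    split; [| split].
    + etransitivity; [| exact G1]. field. lra.
    + etransitivity; [| exact G2]. field. lra.
    + etransitivity; [| exact (interface_balance Hcond)]. field. lra.
  - set (m := Z.to_nat (- n - 2)).
    destruct (geometric_step bm (bm + dm) lm ((/ lm) ^ S m * B) Hbm Hem lm_neq0 Rm)
      as [G1 [G2 G3]].
    fold tm in G1, G2, G3.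
    replace (Z.to_nat (- n - 1)) with (S m) by lia.
    replace (Z.to_nat (- (n - 1) - 1)) with (S (S m)) by lia.
    replace (Z.to_nat (- (n + 1) - 1)) with m by lia.
    split; [| split].
    + etransitivity; [| exact G1]. simpl pow. field. lra.
    + etransitivity; [| exact G2]. simpl pow. field. lra.
    + etransitivity; [| exact G3]. simpl pow. field. lra.
Qed.

Lemma zero_mode_site_nonneg (n : Z) : (0 <= n)%Z ->
  site_eqs (coef_b bp bm) (coef_c bp bm dp dm c) (coef_d bp bm dp dm)
    zero_mode1 zero_mode2 zero_mode3 n.
Proof.
  intros Hn. pose proof lp_neq0.
  pose proof (is_transfer_root_inv tp lp lp_neq0 lp_root) as Rp.
  unfold site_eqs, zero_mode1, zero_mode2, zero_mode3.
  destruct (Z.eq_dec n 0) as [-> | Hn0]; simpl_interface.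
  - destruct (geometric_step bp (bp + dp) (/ lp) A Hbp Hep (Rinv_neq_0_compat _ lp_neq0) Rp)
      as [_ [G2 G3]].
    fold tp in G2, G3. simpl.
    split; [| split].
    + unfold A, B. ring.
    + etransitivity; [| exact G2]. field. lra.
    + etransitivity; [| exact G3]. field. lra.
  - set (m := Z.to_nat (n - 1)).
    destruct (geometric_step bp (bp + dp) (/ lp) ((/ lp) ^ S m * A) Hbp Hep
      (Rinv_neq_0_compat _ lp_neq0) Rp) as [G1 [G2 G3]].
    fold tp in G1, G2, G3.
    replace (Z.to_nat n) with (S m) by lia.
    replace (Z.to_nat (n - 1)) with m by lia.
    replace (Z.to_nat (n + 1)) with (S (S m)) by lia.
    split; [| split].
    + etransitivity; [| exact G1]. simpl pow. field. lra.
    + etransitivity; [| exact G2]. simpl pow. field. lra.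
    + etransitivity; [| exact G3]. simpl pow. field. lra.
Qed.

Lemma zero_mode_solves : (bp + dp) * (bm + dm) * f1_ratio tp * f1_ratio tm = c ^ 2 ->
  interface_system bp bm dp dm c zero_mode1 zero_mode2 zero_mode3.
Proof.
  intros Hcond n. destruct (Z_lt_le_dec n 0).
  - apply zero_mode_site_neg; assumption.
  - apply zero_mode_site_nonneg; assumption.
Qed.

Lemma zero_mode_sq_summable :
  sq_summable zero_mode1 /\ sq_summable zero_mode2 /\ sq_summable zero_mode3.
Proof.
  pose proof (Rabs_inv_lt1 lp lp_gt1). pose proof (Rabs_inv_lt1 lm lm_gt1).
  split; [| split]; apply two_sided_sq_summable; assumption.
Qed.

Lemma zero_mode3_m1_neq0 : zero_mode3 (-1)%Z <> 0.
Proof.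
  pose proof tp_pos. pose proof tp_neq1. pose proof tm_neq1. pose proof lp_neq0.
  unfold zero_mode3, B. simpl_interface. simpl.
  repeat (apply Rmult_integral_contrapositive_currified; [| lra]). lra.
Qed.

Lemma decaying_solution_span :
  (bp + dp) * (bm + dm) * f1_ratio tp * f1_ratio tm = c ^ 2 ->
  forall y1 y2 y3, interface_system bp bm dp dm c y1 y2 y3 -> vanishes y1 -> vanishes y3 ->
  exists k, forall n, y1 n = k * zero_mode1 n /\ y2 n = k * zero_mode2 n /\ y3 n = k * zero_mode3 n.
Proof.
  intros Hcond y1 y2 y3 Hs V1 V3.
  destruct zero_mode_sq_summable as [Q1 [_ Q3]].
  pose proof zero_mode3_m1_neq0 as Hx.
  set (k := y3 (-1)%Z / zero_mode3 (-1)%Z). exists k.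
  pose proof (three_term_lincomb _ _ _ _ _ _ _ _ _ 1 (- k) Hs (zero_mode_solves Hcond)) as Hz.
  pose proof (vanishes_lincomb _ _ 1 (- k) V1 (sq_summable_vanishes _ Q1)) as W1.
  pose proof (vanishes_lincomb _ _ 1 (- k) V3 (sq_summable_vanishes _ Q3)) as W3.
  assert (Z3 : 1 * y3 (-1)%Z + - k * zero_mode3 (-1)%Z = 0) by (unfold k; field; exact Hx).
  pose proof (right_boundary_relation _ _ _ Hz W1 W3) as Hr. cbv beta in Hr.
  rewrite Z3, Rmult_0_r, Rplus_0_l in Hr.
  assert (Z1 : 1 * y1 0%Z + - k * zero_mode1 0%Z = 0).
  { apply Rmult_integral in Hr as [Hr | Hr]; [exfalso | exact Hr].
    apply Rmult_integral in Hr as [Hr | Hr]; [lra | exact (tp2_neq_lp Hr)]. }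
  intro n. destruct (interface_system_unique _ _ _ Hz Z3 Z1 n) as [A1 [A2 A3]].
  cbv beta in A1, A2, A3. lra.
Qed.

Lemma decaying_solution_trivial :
  (bp + dp) * (bm + dm) * f1_ratio tp * f1_ratio tm <> c ^ 2 ->
  forall y1 y2 y3, interface_system bp bm dp dm c y1 y2 y3 -> vanishes y1 -> vanishes y3 ->
  forall n, y1 n = 0 /\ y2 n = 0 /\ y3 n = 0.
Proof.
  intros Hcond y1 y2 y3 Hs V1 V3.
  destruct (linear2_trivial _ _ _ _ _ _ (boundary_det_neq0 Hcond)
    (right_boundary_relation _ _ _ Hs V1 V3) (left_boundary_relation _ _ _ Hs V1 V3))
    as [Z3 Z1].
  exact (interface_system_unique _ _ _ Hs Z3 Z1).
Qed.

Lemma kernel_trivial : (bp + dp) * (bm + dm) * f1_ratio tp * f1_ratio tm <> c ^ 2 ->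
  forall w, eigvec (H_I bp bm dp dm c 0) 0%C w -> forall n j, w n j = 0%C.
Proof.
  intros Hcond w [Hl Hw] n j.
  destruct (kernel_components _ _ _ _ _ _ Hw) as [S1 [S2 [S3 S4]]].
  destruct (in_l2_vanishes w j1 Hl) as [V1 V1'], (in_l2_vanishes w j3 Hl) as [V3 V3'],
    (in_l2_vanishes w j4 Hl) as [V4 V4'], (in_l2_vanishes w j6 Hl) as [V6 V6'].
  pose proof (decaying_solution_trivial Hcond _ _ _ S1 V1 V3 n) as Z1.
  pose proof (decaying_solution_trivial Hcond _ _ _ S2 V1' V3' n) as Z2.
  pose proof (decaying_solution_trivial Hcond _ _ _ S3 V4 V6 n) as Z3.
  pose proof (decaying_solution_trivial Hcond _ _ _ S4 V4' V6' n) as Z4.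
  destruct j; apply injective_projections; simpl; tauto.
Qed.

Lemma kernel_twofold : (bp + dp) * (bm + dm) * f1_ratio tp * f1_ratio tm = c ^ 2 ->
  twofold_eigenvalue (H_I bp bm dp dm c 0) 0%C.
Proof.
  intros Hcond. pose proof (zero_mode_solves Hcond) as Hs.
  destruct zero_mode_sq_summable as [Q1 [Q2 Q3]].
  pose proof sq_summable_zero as Q0. pose proof (three_term_zero
    (coef_b bp bm) (coef_c bp bm dp dm c) (coef_d bp bm dp dm)) as S0.
  exists (embed zero_mode1 zero_mode2 zero_mode3 (fun _ => 0) (fun _ => 0) (fun _ => 0)),
    (embed (fun _ => 0) (fun _ => 0) (fun _ => 0) zero_mode1 zero_mode2 zero_mode3).
  split; [| split; [| split]].
  - split; [apply embed_in_l2 | apply embed_kernel]; assumption.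
  - split; [apply embed_in_l2 | apply embed_kernel]; assumption.
  - intros a b Hab. pose proof zero_mode3_m1_neq0 as Hx.
    pose proof (Hab (-1)%Z j3) as E3. pose proof (Hab (-1)%Z j6) as E6.
    unfold lincomb2, embed in E3, E6.
    rewrite Cmult_0_r, Cplus_0_r in E3. rewrite Cmult_0_r, Cplus_0_l in E6.
    split; [exact (Cmult_RtoC_eq0 a _ Hx E3) | exact (Cmult_RtoC_eq0 b _ Hx E6)].
  - intros w [Hl Hw].
    destruct (kernel_components _ _ _ _ _ _ Hw) as [S1 [S2 [S3 S4]]].
    destruct (in_l2_vanishes w j1 Hl) as [V1 V1'], (in_l2_vanishes w j3 Hl) as [V3 V3'],
      (in_l2_vanishes w j4 Hl) as [V4 V4'], (in_l2_vanishes w j6 Hl) as [V6 V6'].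
    destruct (decaying_solution_span Hcond _ _ _ S1 V1 V3) as [k1 K1],
      (decaying_solution_span Hcond _ _ _ S2 V1' V3') as [k2 K2],
      (decaying_solution_span Hcond _ _ _ S3 V4 V6) as [k3 K3],
      (decaying_solution_span Hcond _ _ _ S4 V4' V6') as [k4 K4].
    exists (k1, k2), (k3, k4). intros n j.
    destruct (K1 n) as [A1 [A2 A3]], (K2 n) as [B1 [B2 B3]],
      (K3 n) as [C1 [C2 C3]], (K4 n) as [D1 [D2 D3]].
    unfold lincomb2, embed, Cmult, Cplus, RtoC.
    destruct j; apply injective_projections; simpl; lra.
Qed.

End Interface.

Theorem theorem9 (bp bm dp dm c : R) :
  0 < bp -> 0 < bm -> 0 < bp + dp -> 0 < bm + dm ->
  dp <> 0 -> dm <> 0 -> 0 < c ->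
  (twofold_eigenvalue (H_I bp bm dp dm c 0) 0%C <->
   (bp + dp) * (bm + dm) * f1 bp dp * f1 bm dm = c ^ 2).
Proof.
  intros Hbp Hbm Hep Hem Hdp Hdm Hc.
  rewrite (f1_eq bp dp), (f1_eq bm dm) by assumption.
  split; [| apply kernel_twofold; assumption].
  intros [u [v [Hu [Hv [Hind _]]]]].
  destruct (Req_dec ((bp + dp) * (bm + dm) * f1_ratio ((bp + dp) / bp)
                     * f1_ratio ((bm + dm) / bm)) (c ^ 2)) as [Hcond | Hcond];
    [exact Hcond | exfalso].
  assert (Hzero : forall w, eigvec (H_I bp bm dp dm c 0) 0%C w -> forall n j, w n j = 0%C)
    by (apply kernel_trivial; assumption).
  assert (H10 : forall n j, lincomb2 1%C 0%C u v n j = 0%C).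
  { intros n j. unfold lincomb2. rewrite (Hzero u Hu), (Hzero v Hv), !Cmult_0_r.
    apply Cplus_0_r. }
  apply R1_neq_R0. exact (f_equal fst (proj1 (Hind _ _ H10))).
Qed.
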